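(* Let $1\le p<\infty$ and for each positive integer $k$ let $Q_k=1-k+\dfrac{k^{1+1/p}}{(k+1)^{1/p}}$. Then $1-p^{-1}\le Q_k\le 2^{-1/p}$ for every positive integer $k$. *)

From Stdlib Require Import Reals.
Open Scope R_scope.

Definition Qk (p : R) (k : nat) : R :=
  1 - INR k + Rpower (INR k) (1 + 1 / p) / Rpower (INR k + 1) (1 / p).

(* Write a = 1/p and K = k.  Both bounds follow from Bernoulli's inequality
   for real exponents, applied to the ratio (K+1)/K: since
   K^(1+a) / (K+1)^a = K / ((K+1)/K)^a, the concave case ((K+1)/K)^a <= 1 + a/K
   gives the lower bound; since the same quotient is (K+1) / ((K+1)/K)^(1+a),
   the convex case at (K+1)/K and at (K+1)/(2K) = ((K+1)/K) / 2 gives the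
   upper bound 2^(-a) = 2 / 2^(1+a). *)

From Stdlib Require Import Reals Lra.
Open Scope R_scope.

Lemma Rpower_pos (x y : R) : 0 < Rpower x y.
Proof. apply exp_pos. Qed.

Lemma exp_ge_tangent (x y : R) : exp x * (1 + (y - x)) <= exp y.
Proof.
  replace (exp y) with (exp x * exp (y - x)) by (rewrite <- exp_plus; f_equal; ring).
  apply Rmult_le_compat_l; [apply Rlt_le, exp_pos | apply exp_ineq1_le].
Qed.

Lemma exp_convex (c u v : R) :
  0 <= c <= 1 -> exp (c * u + (1 - c) * v) <= c * exp u + (1 - c) * exp v.
Proof.
  intros hc.
  set (w := c * u + (1 - c) * v).
  pose proof (exp_ge_tangent w u) as hu.
  pose proof (exp_ge_tangent w v) as hv.
  assert (c * (exp w * (1 + (u - w))) <= c * exp u)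
    by (apply Rmult_le_compat_l; lra).
  assert ((1 - c) * (exp w * (1 + (v - w))) <= (1 - c) * exp v)
    by (apply Rmult_le_compat_l; lra).
  replace (exp w) with
    (c * (exp w * (1 + (u - w))) + (1 - c) * (exp w * (1 + (v - w))))
    by (unfold w; ring).
  lra.
Qed.

Lemma Rpower_le_bernoulli (x c : R) :
  0 < x -> 0 <= c <= 1 -> Rpower x c <= 1 + c * (x - 1).
Proof.
  intros hx hc.
  pose proof (exp_convex c (ln x) 0 hc) as h.
  rewrite exp_ln, exp_0 in h by exact hx.
  replace (c * ln x + (1 - c) * 0) with (c * ln x) in h by ring.
  unfold Rpower; lra.
Qed.

Lemma Rpower_ge_bernoulli (x b : R) :
  0 < x -> 1 <= b -> 1 + b * (x - 1) <= Rpower x b.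
Proof.
  intros hx hb.
  assert (hib : 0 <= / b <= 1).
  { split; [apply Rlt_le, Rinv_0_lt_compat; lra |].
    rewrite <- Rinv_1; apply Rinv_le_contravar; lra. }
  pose proof (Rpower_le_bernoulli (Rpower x b) (/ b) (Rpower_pos x b) hib) as h.
  rewrite Rpower_mult, Rinv_r, Rpower_1 in h by lra.
  apply Rmult_le_compat_l with (r := b) in h; [| lra].
  replace (b * (1 + / b * (Rpower x b - 1))) with (b + Rpower x b - 1) in h
    by (field; lra).
  lra.
Qed.

Lemma Rpower_succ (x a : R) : 0 < x -> Rpower x (1 + a) = x * Rpower x a.
Proof. intros hx; rewrite Rpower_plus, Rpower_1 by exact hx; reflexivity. Qed.

Lemma Rpower_div_eq_inv_ratio (x y a : R) :
  0 < x -> 0 < y -> Rpower x (1 + a) / Rpower y a = x / Rpower (y / x) a.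
Proof.
  intros hx hy.
  assert (hyx : 0 < y / x) by (apply Rdiv_lt_0_compat; lra).
  pose proof (Rpower_pos x a). pose proof (Rpower_pos (y / x) a).
  replace y with (y / x * x) at 1 by (field; lra).
  rewrite <- Rpower_mult_distr, Rpower_succ by lra.
  field; lra.
Qed.

Lemma Rpower_div_eq_inv_ratio_succ (x y a : R) :
  0 < x -> 0 < y -> Rpower x (1 + a) / Rpower y a = y / Rpower (y / x) (1 + a).
Proof.
  intros hx hy.
  assert (hyx : 0 < y / x) by (apply Rdiv_lt_0_compat; lra).
  pose proof (Rpower_pos x (1 + a)). pose proof (Rpower_pos y a).
  pose proof (Rpower_pos (y / x) (1 + a)).
  assert (e : Rpower (y / x) (1 + a) * Rpower x (1 + a) = y * Rpower y a).
  { rewrite Rpower_mult_distr, <- Rpower_succ by lra.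
    replace (y / x * x) with y by (field; lra); reflexivity. }
  replace (y / Rpower (y / x) (1 + a)) with
    (y * Rpower x (1 + a) / (Rpower (y / x) (1 + a) * Rpower x (1 + a)))
    by (field; lra).
  rewrite e; field; lra.
Qed.

Definition Qr (a K : R) : R := 1 - K + Rpower K (1 + a) / Rpower (K + 1) a.

Lemma Qr_lower (a K : R) : 0 <= a <= 1 -> 0 < K -> 1 - a <= Qr a K.
Proof.
  intros ha hK.
  unfold Qr; rewrite Rpower_div_eq_inv_ratio by lra.
  assert (hr : 0 < (K + 1) / K) by (apply Rdiv_lt_0_compat; lra).
  set (t := Rpower ((K + 1) / K) a).
  assert (ht : 0 < t) by apply Rpower_pos.
  assert (hKt : K * t <= K + a).
  { pose proof (Rpower_le_bernoulli _ a hr ha) as h; fold t in h.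
    replace (K + a) with (K * (1 + a * ((K + 1) / K - 1))) by (field; lra).
    apply Rmult_le_compat_l; lra. }
  assert (hKat : (K - a) * t <= K) by nra.
  apply (Rmult_le_reg_r t); [exact ht |].
  replace ((1 - K + K / t) * t) with ((1 - K) * t + K) by (field; lra).
  lra.
Qed.

Lemma Rpower_2_opp (a : R) : Rpower 2 (- a) = 2 / Rpower 2 (1 + a).
Proof.
  pose proof (Rpower_pos 2 a).
  rewrite Rpower_Ropp, Rpower_succ by lra.
  field; lra.
Qed.

Lemma Qr_upper (a K : R) : 0 <= a -> 1 <= K -> Qr a K <= Rpower 2 (- a).
Proof.
  intros ha hK.
  unfold Qr; rewrite Rpower_div_eq_inv_ratio_succ, Rpower_2_opp by lra.
  set (b := 1 + a).
  assert (hb : 1 <= b) by (unfold b; lra).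
  assert (hr : 0 < (K + 1) / K) by (apply Rdiv_lt_0_compat; lra).
  assert (hr2 : 0 < (K + 1) / (2 * K)) by (apply Rdiv_lt_0_compat; lra).
  set (s := Rpower ((K + 1) / K) b).
  set (u := Rpower ((K + 1) / (2 * K)) b).
  set (F := Rpower 2 b).
  assert (hs : 0 < s) by apply Rpower_pos.
  assert (hF : 0 < F) by apply Rpower_pos.
  assert (hsu : s = F * u).
  { unfold s, u, F; rewrite Rpower_mult_distr by lra.
    f_equal; field; lra. }
  assert (hKs : K + b <= K * s).
  { pose proof (Rpower_ge_bernoulli _ b hr hb) as h; fold s in h.
    replace (K + b) with (K * (1 + b * ((K + 1) / K - 1))) by (field; lra).
    apply Rmult_le_compat_l; lra. }
  assert (hKu : 2 * K + b * (1 - K) <= 2 * K * u).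
  { pose proof (Rpower_ge_bernoulli _ b hr2 hb) as h; fold u in h.
    replace (2 * K + b * (1 - K))
      with (2 * K * (1 + b * ((K + 1) / (2 * K) - 1))) by (field; lra).
    apply Rmult_le_compat_l; lra. }
  assert (key : (1 - K) * s + (K + 1) <= 2 * u).
  { apply (Rmult_le_reg_l K); [lra |]. nra. }
  apply (Rmult_le_reg_r s); [exact hs |].
  replace ((1 - K + (K + 1) / s) * s) with ((1 - K) * s + (K + 1)) by (field; lra).
  replace (2 / F * s) with (2 * u) by (rewrite hsu; field; lra).
  exact key.
Qed.

Theorem lemma5p8 (p : R) (hp : 1 <= p) (k : nat) (hk : (1 <= k)%nat) :
  1 - / p <= Qk p k /\ Qk p k <= Rpower 2 (- (1 / p)).
Proof.
  assert (hK : 1 <= INR k) by exact (le_INR 1 k hk).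
  assert (ha : 0 < 1 / p <= 1).
  { split; [apply Rdiv_lt_0_compat; lra |].
    apply Rmult_le_reg_r with p; [lra |].
    replace (1 / p * p) with 1 by (field; lra); lra. }
  change (Qk p k) with (Qr (1 / p) (INR k)).
  replace (/ p) with (1 / p) by (field; lra).
  split; [apply Qr_lower | apply Qr_upper]; lra.
Qed.
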